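(* Assume $T_k$ is nonsingular and let $X_k=V_kT_k^{-1}V_k^*$. Then the Riccati residual $$R_k=C^*C+A^*X_k+X_kA-X_kFX_k$$ satisfies $$R_k=[C^*,V_k]\begin{bmatrix}1\\-T_k^{-1}\mathbf 1\end{bmatrix}\begin{bmatrix}1&-\mathbf 1^*T_k^{-1}\end{bmatrix}[C^*,V_k]^*.$$ In particular, $R_k$ has rank at most one.
   Context: Let $A\in\mathbb C^{n\times n}$, let $C\in\mathbb C^{1\times n}$, and let $F\in\mathbb C^{n\times n}$ be Hermitian; $M^*$ denotes the conjugate transpose. Let $\alpha_1,\dots,\alpha_k\in\mathbb C$ be pairwise distinct with $\operatorname{Re}(\alpha_j)>0$ and $-A^*+\alpha_jI$ nonsingular. Set $$V_k=\big[(-A^*+\alpha_1I)^{-1}C^*,\dots,(-A^*+\alpha_kI)^{-1}C^*\big]\in\mathbb C^{n\times k},$$ $\Lambda_k=\operatorname{diag}(\alpha_1,\dots,\alpha_k)$, $\mathbf 1=[1,\dots,1]^T\in\mathbb R^k$, and let $T_k\in\mathbb C^{k\times k}$ be the matrix with entries $T_k(i,j)=\dfrac{1+(V_k^*FV_k)_{ij}}{\bar\alpha_i+\alpha_j}$, i.e. the unique solution of $\Lambda_k^*T+T\Lambda_k=V_k^*FV_k+\mathbf 1\mathbf 1^*$. *)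

From HB Require Import structures.
From mathcomp Require Import all_boot all_order all_algebra.
Set Implicit Arguments. Unset Strict Implicit. Unset Printing Implicit Defensive.
Import Order.TTheory GRing.Theory Num.Theory.
Local Open Scope ring_scope.

Definition ctmx (C : numClosedFieldType) (m n : nat) (M : 'M[C]_(m, n)) : 'M[C]_(n, m) :=
  (map_mx Num.conj M)^T.

Definition Vmat (C : numClosedFieldType) (n k : nat) (A : 'M[C]_n) (Cm : 'M[C]_(1, n))
  (alpha : 'I_k -> C) : 'M[C]_(n, k) :=
  \matrix_(i < n, j < k)
     ((invmx (- ctmx A + (alpha j)%:M) *m ctmx Cm) i 0).

Definition Tmat (C : numClosedFieldType) (n k : nat) (V : 'M[C]_(n, k)) (F : 'M[C]_n)
  (alpha : 'I_k -> C) : 'M[C]_k :=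
  \matrix_(i < k, j < k)
     ((1 + (ctmx V *m F *m V) i j) / (Num.conj (alpha i) + alpha j)).

From HB Require Import structures.
From mathcomp Require Import all_boot all_order all_algebra.
Import Order.TTheory GRing.Theory Num.Theory.
Set Implicit Arguments. Unset Strict Implicit. Unset Printing Implicit Defensive.
Local Open Scope ring_scope.

(* Write M^H for the conjugate transpose (ctmx), c = C^H,
   Lambda = diag(alpha), e = 1 (the all-ones column), S = T^{-1} and
   X = V S V^H.  Two identities drive the proof:
   - a Sylvester relation for V: the column w_j = (-A^H + alpha_j I)^{-1} c
     satisfies  A^H w_j = alpha_j w_j - c,  hence  A^H V = V Lambda - c e^H;
   - a Lyapunov relation for T: as conj(alpha_i) + alpha_j has positive real
     part, the entrywise definition of T says exactly
     Lambda^H T + T Lambda = V^H F V + e e^H.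
   A purely algebraic computation, valid for arbitrary A, F, Lambda, e and
   any invertible T, shows that these two relations force the residual to
   factor as  R = (c - V S e) (c^H - e^H S V^H):  the terms involving Lambda
   cancel in pairs. *)

Section ConjugateTranspose.
Variable C : numClosedFieldType.

Lemma ctmxK m n (M : 'M[C]_(m, n)) : ctmx (ctmx M) = M.
Proof. by apply/matrixP => i j; rewrite /ctmx !mxE conjCK. Qed.

Lemma ctmxM m n p (M : 'M[C]_(m, n)) (N : 'M[C]_(n, p)) :
  ctmx (M *m N) = ctmx N *m ctmx M.
Proof.
apply/matrixP => i j; rewrite /ctmx !mxE rmorph_sum; apply: eq_bigr => l _.
by rewrite !mxE rmorphM mulrC.
Qed.

Lemma ctmxB m n (M N : 'M[C]_(m, n)) : ctmx (M - N) = ctmx M - ctmx N.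
Proof. by apply/matrixP => i j; rewrite /ctmx !mxE rmorphB. Qed.

Lemma ctmx_diag n (d : 'rV[C]_n) :
  ctmx (diag_mx d) = diag_mx (map_mx Num.conj d).
Proof. by rewrite /ctmx map_diag_mx tr_diag_mx. Qed.

Lemma ctmx_row_mx m n1 n2 (M : 'M[C]_(m, n1)) (N : 'M[C]_(m, n2)) :
  ctmx (row_mx M N) = col_mx (ctmx M) (ctmx N).
Proof. by rewrite /ctmx map_row_mx tr_row_mx. Qed.

End ConjugateTranspose.

(* The bookkeeping of the final cancellation: in the expanded residual the
   terms d and b (the ones involving Lambda) occur once with each sign. *)
Lemma cancel_pairs (V : zmodType) (a b c d e f : V) :
  a + (b - c) + (d - e) - (d + b - f) = a - e - (c - f).
Proof.
rewrite opprB [d + b]addrC opprD !addrA.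
rewrite (addrAC _ (- b) (- d)) (addrAC _ f (- d)) (addrAC _ (- e) (- d)) addrK.
rewrite (addrAC _ f (- b)) (addrAC _ (- e) (- b)) (addrAC _ (- c) (- b)) addrK.
by rewrite opprB addrA (addrAC a (- c)) (addrAC _ (- c) f).
Qed.

Section RiccatiResidual.
Variables (C : numClosedFieldType) (n k : nat).

Lemma shifted_solve (B : 'M[C]_n) (a : C) (c : 'cV[C]_n) :
  (- B + a%:M) \in unitmx ->
  B *m (invmx (- B + a%:M) *m c) = a *: (invmx (- B + a%:M) *m c) - c.
Proof.
move=> unitBa; set w := invmx _ *m c.
have solve_w : (- B + a%:M) *m w = c by rewrite mulKVmx.
by rewrite -solve_w mulmxDl mul_scalar_mx mulNmx opprD opprK addrCA subrr addr0.
Qed.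

Lemma Vmat_sylvester (A : 'M[C]_n) (Cm : 'M[C]_(1, n)) (alpha : 'I_k -> C) :
  (forall j, (- ctmx A + (alpha j)%:M) \in unitmx) ->
  ctmx A *m Vmat A Cm alpha =
  Vmat A Cm alpha *m diag_mx (\row_j alpha j)
    - ctmx Cm *m ctmx (const_mx 1 : 'cV[C]_k).
Proof.
move=> unit_shift; apply/matrixP => i j.
have col_j : (ctmx A *m Vmat A Cm alpha) i j
    = (ctmx A *m (invmx (- ctmx A + (alpha j)%:M) *m ctmx Cm)) i 0.
  by rewrite !mxE; apply: eq_bigr => l _; rewrite !mxE.
rewrite col_j shifted_solve // mul_mx_diag !mxE big_ord1 !mxE.
by rewrite mulrC rmorph1 mulr1.
Qed.

Lemma Tmat_lyapunov (V : 'M[C]_(n, k)) (F : 'M[C]_n) (alpha : 'I_k -> C) :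
  (forall i j, Num.conj (alpha i) + alpha j != 0) ->
  let L := diag_mx (\row_j alpha j) in
  let one : 'cV[C]_k := const_mx 1 in
  ctmx L *m Tmat V F alpha + Tmat V F alpha *m L - one *m ctmx one =
  ctmx V *m F *m V.
Proof.
move=> denom_neq0 L one; rewrite /L ctmx_diag; apply/matrixP => i j.
rewrite mul_mx_diag mul_diag_mx !mxE big_ord1 !mxE rmorph1 mulr1.
rewrite [_^* * _]mulrC -mulrDr divfK ?denom_neq0 //.
by rewrite [1 + _]addrC addrK.
Qed.

Lemma conj_add_neq0 (a b : C) : 0 < 'Re a -> 0 < 'Re b -> Num.conj a + b != 0.
Proof.
move=> Re_a Re_b; apply/eqP => sum0.
have Re_add (x y : C) : 'Re (x + y) = 'Re x + 'Re y by rewrite raddfD.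
have Re_sum : 'Re (Num.conj a + b) = 'Re a + 'Re b by rewrite Re_add Re_conj.
by move: (addr_gt0 Re_a Re_b); rewrite -Re_sum sum0 raddf0 ltxx.
Qed.

Lemma riccati_residual_factor (A F : 'M[C]_n) (c : 'cV[C]_n)
    (V : 'M[C]_(n, k)) (L T : 'M[C]_k) (e : 'cV[C]_k) :
  T \in unitmx ->
  ctmx A *m V = V *m L - c *m ctmx e ->
  ctmx V *m F *m V = ctmx L *m T + T *m L - e *m ctmx e ->
  let S := invmx T in
  let X := V *m S *m ctmx V in
  c *m ctmx c + ctmx A *m X + X *m A - X *m F *m X =
  (c - V *m S *m e) *m (ctmx c - ctmx e *m S *m ctmx V).
Proof.
move=> unitT sylvester lyapunov S X.
have adj_sylvester : ctmx V *m A = ctmx L *m ctmx V - e *m ctmx c.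
  by rewrite -[A]ctmxK -ctmxM sylvester ctmxB !ctmxM !ctmxK.
have cancelST m (M : 'M[C]_(m, k)) : M *m S *m T = M.
  by rewrite -mulmxA mulVmx // mulmx1.
have cancelTS m (M : 'M[C]_(m, k)) : M *m T *m S = M.
  by rewrite -mulmxA mulmxV // mulmx1.
have AX : ctmx A *m X = V *m L *m S *m ctmx V - c *m ctmx e *m S *m ctmx V.
  by rewrite /X !mulmxA sylvester !(mulmxBl, mulmxA).
have XA : X *m A = V *m S *m ctmx L *m ctmx V - V *m S *m e *m ctmx c.
  by rewrite /X -mulmxA adj_sylvester !(mulmxBr, mulmxN, mulmxA).
have XFX : X *m F *m X = V *m S *m ctmx L *m ctmx V + V *m L *m S *m ctmx V
                         - V *m S *m e *m ctmx e *m S *m ctmx V.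
  have -> : X *m F *m X = V *m S *m (ctmx V *m F *m V) *m S *m ctmx V.
    by rewrite /X !mulmxA.
  rewrite lyapunov !(mulmxDr, mulmxBr, mulmxN, mulmxDl, mulmxBl, mulNmx, mulmxA).
  by rewrite cancelST cancelTS.
rewrite AX XA XFX !(mulmxDr, mulmxBr, mulmxN, mulmxDl, mulmxBl, mulNmx, mulmxA).
exact: cancel_pairs.
Qed.

End RiccatiResidual.

Theorem proposition6p3 (C : numClosedFieldType) (n k : nat)
  (A : 'M[C]_n) (Cm : 'M[C]_(1, n)) (F : 'M[C]_n) (alpha : 'I_k -> C) :
  ctmx F = F ->
  injective alpha ->
  (forall j, 0 < 'Re (alpha j)) ->
  (forall j, (- ctmx A + (alpha j)%:M) \in unitmx) ->
  let V := Vmat A Cm alpha in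
  let T := Tmat V F alpha in
  T \in unitmx ->
  let X := V *m invmx T *m ctmx V in
  let R := ctmx Cm *m Cm + ctmx A *m X + X *m A - X *m F *m X in
  let W : 'M[C]_(n, 1 + k) := row_mx (ctmx Cm) V in
  let one : 'cV[C]_k := const_mx 1 in
  let u : 'cV[C]_(1 + k) := col_mx 1 (- (invmx T *m one)) in
  let v : 'rV[C]_(1 + k) := row_mx 1 (- (ctmx one *m invmx T)) in
  R = W *m (u *m v) *m ctmx W /\ (\rank R <= 1)%N.
Proof.
move=> _ _ Re_pos unit_shift V T unitT X R W one u v.
have lyapunov := Tmat_lyapunov V F (fun i j => conj_add_neq0 (Re_pos i) (Re_pos j)).
have residual : R = (W *m u) *m (v *m ctmx W).
  rewrite /R -[Z in ctmx Cm *m Z]ctmxK.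
  rewrite (riccati_residual_factor unitT (Vmat_sylvester Cm unit_shift)
             (esym lyapunov)) ctmxK.
  rewrite /W /u /v ctmx_row_mx ctmxK !mul_row_col.
  by rewrite mulmx1 mul1mx mulmxN mulNmx !mulmxA.
split; first by rewrite residual !mulmxA.
by rewrite residual (leq_trans (mxrankM_maxl _ _)) ?rank_leq_col.
Qed.
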